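(* Let $\Theta_4$ have vertices $v_1,v_2$ and edges $e_1,\dots,e_4$, and let $h_{i,j}$ be the half-edge incident on $v_i$ and $e_j$. Define \[A_2=\sum_{\sigma\in\Sigma_4}\mathrm{sgn}(\sigma)(e_1-e_{\sigma(3)})(h_{1,\sigma(1)}-h_{1,1})(h_{2,\sigma(2)}-h_{2,1})\] in the reduced Świątkowski complex of $\Theta_4$ (degree $2$, weight $3$). Then $A_2$ is a cycle, and its class $[A_2]$ generates $H_2(B_3(\Theta_4))$.
   Context: $\Theta_4$ is the graph with two vertices and four edges joining them. The Świątkowski complex of a graph $\Gamma$ is $S(\Gamma)=\mathbb{Z}[E]\otimes\bigotimes_{v\in V}\mathbb{Z}\langle\varnothing,v,h\in H(v)\rangle$ ($H(v)$ the half-edges at $v$, $E$ the edges), bigraded by $|\varnothing|=(0,0)$, $|v|=|e|=(0,1)$, $|h|=(1,1)$ (homological degree, weight), with differential the $\mathbb{Z}[E]$-linear derivation (with Koszul signs, half-edge generators at different vertices anticommuting) determined by $\partial h=e(h)-v(h)$; factors $\varnothing$ are omitted from notation. The reduced complex $\widetilde S(\Gamma)$ replaces each factor by the submodule spanned by $\varnothing$ and the differences of half-edges at $v$; it is quasi-isomorphic to $S(\Gamma)$ when $\Gamma$ has no isolated vertices. The homology of $S(\Gamma)$ in degree $i$ and weight $k$ is naturally isomorphic to $H_i(B_k(\Gamma))$, where $B_k(\Gamma)$ is the unordered configuration space of $k$ points. *)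

From HB Require Import structures.
From mathcomp Require Import all_boot all_order all_algebra all_fingroup.
Set Implicit Arguments. Unset Strict Implicit. Unset Printing Implicit Defensive.
Import GRing.Theory Num.Theory.
Local Open Scope ring_scope.

(* A finite graph, given by half-edge data: each half-edge h has a vertex
   [vert h] and an edge [edg h].  H(v) = {h | vert h = v}. *)

(* Generators of S(Γ) as a Z-module: a monomial in Z[E] (exponent vector)
   together with a state: for each vertex v, the tensor factor chosen in
   Z<∅, v, h ∈ H(v)> :  None = ∅,  Some None = v,  Some (Some h) = h. *)
Definition mono (E : finType) := {ffun E -> nat}.
Definition state (V H : finType) := {ffun V -> option (option H)}.
Definition gen (V E H : finType) := (mono E * state V H)%type.

Definition valid_state (V H : finType) (vert : H -> V) (s : state V H) : bool :=
  [forall v, forall h, (s v == Some (Some h)) ==> (vert h == v)].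

Definition is_half (H : finType) (x : option (option H)) : bool :=
  if x is Some (Some _) then true else false.

Definition sdeg (V H : finType) (s : state V H) : nat := #|[set v | is_half (s v)]|.

Definition gwt (V E H : finType) (g : gen V E H) : nat :=
  (\sum_(e : E) g.1 e)%N + #|[set v | g.2 v != None]|.

(* In each weight there are only
   finitely many generators, so such a coefficient function has finite
   support automatically. *)
Definition is_chain (V E H : finType) (vert : H -> V) (i k : nat)
    (c : gen V E H -> int) : Prop :=
  forall g, c g != 0 -> [&& valid_state vert g.2, sdeg g.2 == i & gwt g == k].

Definition decr (E : finType) (m : mono E) (e : E) : mono E :=
  [ffun e' => if e' == e then (m e').-1 else m e'].

Definition upd (V H : finType) (s : state V H) (v : V) (x : option (option H))
  : state V H := [ffun v' => if v' == v then x else s v'].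

(* Koszul sign: (-1)^(number of half-edge factors strictly before v),
   the tensor factors being ordered by the enumeration order of V. *)
Definition ksign (V H : finType) (s : state V H) (v : V) : int :=
  (-1) ^+ #|[set v' | (enum_rank v' < enum_rank v)%N && is_half (s v')]|.

(* The differential: the Z[E]-linear derivation with ∂h = e(h) - v(h),
   written out on coefficients: the coefficient of the generator (m, s) in ∂c. *)
Definition sdiff (V E H : finType) (vert : H -> V) (edg : H -> E)
    (c : gen V E H -> int) (g : gen V E H) : int :=
  let m := g.1 in let s := g.2 in
  \sum_(v : V)
    match s v with
    | None => \sum_(h : H | vert h == v)
                if (0 < m (edg h))%N
                then ksign s v * c (decr m (edg h), upd s v (Some (Some h)))
                else 0
    | Some None => - \sum_(h : H | vert h == v)
                      ksign s v * c (m, upd s v (Some (Some h)))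
    | Some (Some _) => 0
    end.

(* vertices v_1, v_2 = 0, 1 : 'I_2 ; edges e_1..e_4 = 0..3 : 'I_4 ;
   half-edge h_{i,j} = (i-1, j-1) : 'I_2 * 'I_4. *)
Definition T4V := 'I_2.
Definition T4E := 'I_4.
Definition T4H := ('I_2 * 'I_4)%type.
Definition t4vert (h : T4H) : T4V := h.1.
Definition t4edg (h : T4H) : T4E := h.2.

Definition t4gen := gen T4V T4E T4H.

(* basis element  e_j h_{1,a} h_{2,b}  (0-based indices) *)
Definition t4term (j a b : 'I_4) : t4gen :=
  ([ffun e => if e == j then 1%N else 0%N],
   [ffun v : 'I_2 => if v == ord0 then Some (Some (ord0, a))
                     else Some (Some (v, b))]).

Definition delta (g0 : t4gen) (g : t4gen) : int := (g == g0)%:Z.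

(* e_j (h_{1,a} - h_{1,1}) (h_{2,b} - h_{2,1}) *)
Definition t4pprod (j a b : 'I_4) (g : t4gen) : int :=
  delta (t4term j a b) g - delta (t4term j ord0 b) g
  - delta (t4term j a ord0) g + delta (t4term j ord0 ord0) g.

Definition A2 (g : t4gen) : int :=
  \sum_(s : 'S_4) (-1) ^+ s *
    (t4pprod ord0 (s ord0) (s 1) g - t4pprod (s 2) (s ord0) (s 1) g).

(* In weight 3 the degree-2 generators of S(Θ4) are the products
   e_j h_{1,a} h_{2,b}, so a degree-2 chain is a table f(j,a,b) of integers
   indexed by three edges.  We show that every 2-cycle is an integer
   multiple of [A_2] (the boundary correction can be taken to be 0).
   - Computing the boundary of the chain of a table f shows: f is a cycle
     iff f is a "cycle table": antisymmetric in the first two and in the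
     first and last entries, with vanishing sums over the middle entry
     (each of the four kinds of boundary coefficient gives one relation).
   - Reading a cycle table along a permutation s, s |-> f(s2, s0, s1) changes
     sign under every transposition, so f is determined by f(2,0,1): cycle
     tables form a free Z-module of rank one.
   - The table alpha of [A_2] is the signed sum over permutations selecting
     (s2, s0, s1); it is a cycle table with alpha(2,0,1) = -1, hence a
     generator, and every cycle z equals -z(2,0,1) A_2. *)

From mathcomp Require Import all_boot all_order all_algebra all_fingroup.
From mathcomp Require Import zify ring.
Set Implicit Arguments. Unset Strict Implicit. Unset Printing Implicit Defensive.
Import GRing.Theory Num.Theory.
Local Open Scope ring_scope.

Section SignedSumsOverPermutations.
Variables (T : finType) (R : pzRingType).

Lemma perm_redirect (s : {perm T}) (p x : T) :
  exists2 s' : {perm T}, s' p = x & forall q, q != p -> s q != x -> s' q = s q.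
Proof.
exists (s * tperm (s p) x)%g => [|q neq_qp neq_sqx]; first by rewrite permM tpermL.
by rewrite permM tpermD // 1?eq_sym ?(inj_eq perm_inj).
Qed.

Lemma perm_of_triple (p0 p1 p2 x0 x1 x2 : T) :
  p0 != p1 -> p0 != p2 -> p1 != p2 -> x0 != x1 -> x0 != x2 -> x1 != x2 ->
  exists s : {perm T}, [/\ s p0 = x0, s p1 = x1 & s p2 = x2].
Proof.
move=> p01 p02 p12 x01 x02 x12.
have [s0 s0p0 _] := perm_redirect 1 p0 x0.
have [s1 s1p1 s1E] := perm_redirect s0 p1 x1.
have [s2 s2p2 s2E] := perm_redirect s1 p2 x2.
have s1p0 : s1 p0 = x0 by rewrite s1E // s0p0.
exists s2; split => //; rewrite s2E ?s1p0 ?s1p1 // eq_sym //.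
Qed.

Lemma perm_fix_but_one (s : {perm T}) (p : T) :
  (forall x, x != p -> s x = x) -> s = 1%g.
Proof.
move=> fix_s; have sp : s p = p.
  apply/eqP; apply: contraT => /[dup] ne /fix_s /perm_inj.
  by move/eqP; rewrite (negbTE ne).
by apply/permP => x; rewrite perm1; case: (eqVneq x p) => [->|/fix_s].
Qed.

Lemma alternating_perm (F : {perm T} -> R) :
  (forall x y s, x != y -> F (tperm x y * s)%g = - F s) ->
  forall s, F s = (-1) ^+ s * F 1%g.
Proof.
move=> F_alt s; have [ts -> dts] := prod_tpermP s.
elim: ts dts => [|t ts IH] /=; first by rewrite big_nil odd_perm1 mul1r.
case/andP => dt dts; rewrite big_cons F_alt // IH // odd_mul_tperm dt.
by rewrite signr_addb expr1 mulN1r mulNr.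
Qed.

End SignedSumsOverPermutations.

Lemma alternating_sum_eq0 (T : finType) (R : numDomainType) (x y : T)
    (F : {perm T} -> R) :
  x != y -> (forall s, F (tperm x y * s)%g = F s) ->
  \sum_(s : {perm T}) (-1) ^+ s * F s = 0.
Proof.
move=> xy F_inv; apply/eqP; rewrite -eqNr -sumrN; apply/eqP.
rewrite [RHS](reindex_inj (mulgI (tperm x y))) /=; apply: eq_bigr => s _.
by rewrite F_inv odd_mul_tperm xy signr_addb expr1 mulN1r mulNr.
Qed.

(* The edges e_1, ..., e_4 of Θ4 are the indices i0, ..., i3 : 'I_4. *)
Definition i0 : 'I_4 := ord0.
Definition i1 : 'I_4 := Ordinal (isT : 1 < 4)%N.
Definition i2 : 'I_4 := Ordinal (isT : 2 < 4)%N.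
Definition i3 : 'I_4 := Ordinal (isT : 3 < 4)%N.

Lemma I4_cases (i : 'I_4) : [\/ i = i0, i = i1, i = i2 | i = i3].
Proof.
by case: i => [[|[|[|[|//]]]] lt_i4]; [apply: Or41|apply: Or42|apply: Or43|apply: Or44];
  apply: val_inj.
Qed.

Lemma sum_I4 (g : 'I_4 -> int) : \sum_i g i = g i0 + g i1 + g i2 + g i3.
Proof.
rewrite !big_ord_recl big_ord0 addr0 !addrA.
by repeat congr (_ + _); congr g; apply: val_inj.
Qed.

Lemma sum_I4_perm (g : 'I_4 -> int) (s : 'S_4) :
  \sum_i g i = g (s i0) + g (s i1) + g (s i2) + g (s i3).
Proof. by rewrite (reindex_inj (@perm_inj _ s)) sum_I4. Qed.

(* A table [f j a b] is the list of coefficients of a chain on the generators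
   e_j h_{1,a} h_{2,b}.  It is a cycle table when it satisfies the relations
   that express that this chain is a cycle. *)
Definition table := 'I_4 -> 'I_4 -> 'I_4 -> int.

Definition cycle_table (f : table) : Prop :=
  [/\ forall j a b, f j a b = - f a j b,
      forall j a b, f j a b = - f b a j
    & forall j b, \sum_a f j a b = 0].

Section CycleTables.
Variable f : table.
Hypothesis f_cycle : cycle_table f.

Lemma table_swap12 j a b : f j a b = - f a j b. Proof. by case: f_cycle. Qed.
Lemma table_swap13 j a b : f j a b = - f b a j. Proof. by case: f_cycle. Qed.
Lemma table_sum2 j b : \sum_a f j a b = 0. Proof. by case: f_cycle. Qed.

(* The two antisymmetries generate all permutations of the entries, and the
   sum over the middle entry then vanishes over every entry. *)
Lemma table_swap23 j a b : f j a b = - f j b a.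
Proof. by rewrite table_swap12 table_swap13 table_swap12 !opprK. Qed.

Lemma table_sum1 a b : \sum_j f j a b = 0.
Proof. by under eq_bigr do rewrite table_swap12; rewrite sumrN table_sum2 oppr0. Qed.

Lemma table_sum3 j a : \sum_b f j a b = 0.
Proof.
by under eq_bigr do rewrite table_swap13 table_swap12 opprK; rewrite table_sum2.
Qed.

Lemma table_diag12 j b : f j j b = 0.
Proof. by apply/eqP; rewrite -eqNr -table_swap12. Qed.
Lemma table_diag13 j a : f j a j = 0.
Proof. by apply/eqP; rewrite -eqNr -table_swap13. Qed.
Lemma table_diag23 j a : f j a a = 0.
Proof. by apply/eqP; rewrite -eqNr -table_swap23. Qed.

(* Read along a permutation, a cycle table is alternating: swapping two of
   the first three positions is an antisymmetry, and swapping one of them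
   with the fourth is the vanishing of a sum, whose two terms with repeated
   entries drop out. *)
Lemma table_perm_sign (s : 'S_4) :
  f (s i2) (s i0) (s i1) = (-1) ^+ s * f i2 i0 i1.
Proof.
pose F (s : 'S_4) := f (s i2) (s i0) (s i1).
suff F_alt x y s' : x != y -> F (tperm x y * s')%g = - F s'.
  by rewrite [LHS](alternating_perm F_alt s) /F !perm1.
wlog lt_xy : x y / (x < y)%N => [W ne_xy|_].
  have [/W|/W|/val_inj eq_xy] := ltngtP x y; last by rewrite eq_xy eqxx in ne_xy.
  - by apply.
  - by rewrite tpermC; apply; rewrite eq_sym.
rewrite /F !permM.
case: (I4_cases x) (I4_cases y) lt_xy => -> [] -> //= _;
  rewrite ?tpermL ?tpermR ?tpermD //.
- exact: table_swap23.
- exact: table_swap12.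
- have := table_sum2 (s' i2) (s' i1).
  by rewrite (sum_I4_perm _ s') table_diag23 table_diag12; lia.
- exact: table_swap13.
- have := table_sum3 (s' i2) (s' i0).
  by rewrite (sum_I4_perm _ s') table_diag23 table_diag13; lia.
- have := table_sum1 (s' i0) (s' i1).
  by rewrite (sum_I4_perm _ s') table_diag12 table_diag13; lia.
Qed.

(* Every triple of distinct entries is read along some permutation, so a
   cycle table vanishing at (i2, i0, i1) vanishes. *)
Lemma cycle_table_eq0 : f i2 i0 i1 = 0 -> forall j a b, f j a b = 0.
Proof.
move=> f201 j a b.
have [->|ja] := eqVneq j a; first exact: table_diag12.
have [->|jb] := eqVneq j b; first exact: table_diag13.
have [->|ab] := eqVneq a b; first exact: table_diag23.
have [s [<- <- <-]] : exists s : 'S_4, [/\ s i0 = a, s i1 = b & s i2 = j].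
  by apply: perm_of_triple; rewrite // eq_sym.
by rewrite table_perm_sign f201 mulr0.
Qed.

End CycleTables.

Lemma cycle_table_lincomb (f g : table) (c : int) :
  cycle_table f -> cycle_table g -> cycle_table (fun j a b => f j a b + c * g j a b).
Proof.
move=> [f12 f13 f2] [g12 g13 g2]; split=> [j a b|j a b|j b].
- by rewrite f12 g12 mulrN opprD.
- by rewrite f13 g13 mulrN opprD.
- by rewrite big_split /= -mulr_sumr f2 g2 mulr0 addr0.
Qed.

(* The table of [A_2] (see [A2_term] below). *)
Definition alpha (j a b : 'I_4) : int :=
  - \sum_(s : 'S_4) (-1) ^+ s * ((s i2 == j) && (s i0 == a) && (s i1 == b))%:Z.

(* Exchanging two entries of the triple amounts to reindexing the defining
   sum by a transposition. *)
Lemma alpha_swap (x y : 'I_4) j a b j' a' b' : x != y ->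
  (forall s : 'S_4,
     [&& s (tperm x y i2) == j, s (tperm x y i0) == a & s (tperm x y i1) == b] =
     [&& s i2 == j', s i0 == a' & s i1 == b']) ->
  alpha j a b = - alpha j' a' b'.
Proof.
move=> xy eq_sel; rewrite /alpha opprK (reindex_inj (mulgI (tperm x y))) /=.
rewrite -sumrN; apply: eq_bigr => s _.
by rewrite odd_mul_tperm xy signr_addb expr1 mulN1r mulNr opprK !permM -!andbA eq_sel.
Qed.

(* The antisymmetries of [alpha] come from reindexing; summing over the
   middle entry leaves a selection that ignores the positions i0 and i3. *)
Lemma alpha_cycle_table : cycle_table alpha.
Proof.
split=> [j a b|j a b|j b].
- apply: (alpha_swap (x := i0) (y := i2)) => // s.
  by rewrite tpermR tpermL tpermD //; case: (s i0 == j); case: (s i2 == a).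
- apply: (alpha_swap (x := i1) (y := i2)) => // s.
  by rewrite tpermR tpermL tpermD //; case: (s i1 == j); case: (s i2 == b);
    case: (s i0 == a).
- have sum_sel (s : 'S_4) : \sum_a ((s i2 == j) && (s i0 == a) && (s i1 == b))%:Z
                             = ((s i2 == j) && (s i1 == b))%:Z :> int.
    rewrite (bigD1 (s i0)) //= eqxx andbT big1 ?addr0 // => a /negbTE.
    by rewrite eq_sym => ->; rewrite andbF.
  rewrite /alpha sumrN exchange_big /=.
  under eq_bigr do rewrite -mulr_sumr sum_sel.
  rewrite (alternating_sum_eq0 (x := i0) (y := i3)) ?oppr0 // => s.
  by rewrite !permM tpermD // tpermD.
Qed.

(* Only the identity selects (i2, i0, i1). *)
Lemma alpha_201 : alpha i2 i0 i1 = -1.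
Proof.
rewrite /alpha (bigD1 1%g) //= !perm1 !eqxx odd_perm1 mul1r big1 ?addr0 // => s ne_s1.
case fix_s: (_ && _ && _); last by rewrite mulr0.
move: fix_s => /andP[/andP[/eqP s2 /eqP s0] /eqP s1].
case/eqP: ne_s1; apply: (@perm_fix_but_one _ _ i3) => x.
by case: (I4_cases x) => ->.
Qed.

Lemma cycle_table_rank_one (f : table) :
  cycle_table f -> forall j a b, f j a b = - f i2 i0 i1 * alpha j a b.
Proof.
move=> f_cycle j a b; apply/eqP; rewrite -subr_eq0 -mulNr opprK; apply/eqP.
have lincomb := cycle_table_lincomb (f i2 i0 i1) f_cycle alpha_cycle_table.
by apply: (cycle_table_eq0 lincomb); rewrite alpha_201 mulrN1 subrr.
Qed.

Lemma sdiff_ext (V E H : finType) (vert : H -> V) (edg : H -> E) (c c' : gen V E H -> int) :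
  (forall g, c g = c' g) -> forall g, sdiff vert edg c g = sdiff vert edg c' g.
Proof.
move=> eq_cc' g; rewrite /sdiff; apply: eq_bigr => v _.
by case: (g.2 v) => [[h|]|] //; [congr (- _)|]; apply: eq_bigr => h _; rewrite eq_cc'.
Qed.

Lemma sdiff_zero (V E H : finType) (vert : H -> V) (edg : H -> E) g :
  sdiff vert edg (fun _ => 0) g = 0.
Proof.
rewrite /sdiff big1 // => v _.
by case: (g.2 v) => [[h|]|] //; rewrite big1 ?oppr0 // => h _; rewrite mulr0 ?if_same.
Qed.

Definition v1 : T4V := ord0.
Definition v2 : T4V := ord_max.

Lemma T4V_cases (v : T4V) : v = v1 \/ v = v2.
Proof. by case: v => [[|[|//]] lt_v2]; [left|right]; apply: val_inj. Qed.

Lemma sum_T4V (F : T4V -> int) : \sum_v F v = F v1 + F v2.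
Proof. by rewrite big_ord_recl big_ord1; congr (_ + F _); apply: val_inj. Qed.

Definition edge_mono (j : T4E) : mono T4E := [ffun e => if e == j then 1%N else 0%N].
Definition edge_mono2 (j k : T4E) : mono T4E := [ffun e => ((e == j) + (e == k))%N].

Lemma edge_mono_eq j j' : (edge_mono j == edge_mono j') = (j == j').
Proof.
apply/eqP/eqP => [|->//] /ffunP /(_ j); rewrite !ffunE eqxx.
by case: eqP.
Qed.

Lemma edge_mono2C j k : edge_mono2 j k = edge_mono2 k j.
Proof. by apply/ffunP => e; rewrite !ffunE addnC. Qed.

Lemma edge_mono2_eq p q j k :
  (edge_mono2 p q == edge_mono2 j k) = ((j == p) && (k == q)) || ((j == q) && (k == p)).
Proof.
apply/eqP/idP => [eq_pq|]; last first.
  by case/orP => /andP [/eqP -> /eqP ->] //; rewrite edge_mono2C.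
have := congr1 (fun m : mono T4E => m j) eq_pq.
have := congr1 (fun m : mono T4E => m k) eq_pq.
rewrite /= !ffunE !eqxx.
case: (j =P p) => [->|_]; first by case: (k == q) => /=; lia.
by case: (j =P q) => [->|_] /=; [case: (k == p) => /=|]; lia.
Qed.

Lemma decr_edge_mono (m : mono T4E) (e j : T4E) :
  (0 < m e)%N && (decr m e == edge_mono j) = (m == edge_mono2 j e).
Proof.
apply/idP/eqP => [/andP[me /eqP/ffunP decr_m]|->].
  apply/ffunP => x; have := decr_m x; rewrite !ffunE.
  case: (x =P e) => [->|_] /=; last by case: (x == j) => /=; lia.
  by case: (m e) me => // n _; case: (e == j) => /=; lia.
rewrite !ffunE eqxx addn1 /=; apply/eqP/ffunP => x.
rewrite !ffunE; case: (x =P e) => [->|_] /=;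
  by case: (_ == j) => /=; lia.
Qed.

Lemma mono_deg1 (m : mono T4E) : (\sum_e m e)%N = 1%N -> exists j, m = edge_mono j.
Proof.
move=> deg1; have [j mj] : exists j, m j != 0%N.
  apply/existsP; apply: contraT; rewrite negb_exists => /forallP m0.
  by move: deg1; rewrite big1 // => e _; apply/eqP; rewrite -[_ == _]negbK m0.
have mj_pos : (0 < m j)%N by rewrite lt0n.
have rest0 i : i != j -> m i = 0%N.
  move=> ij; move: deg1; rewrite (bigD1 j) //= (bigD1 i) //=.
  set a := m j in mj_pos *; set b := m i; lia.
exists j; apply/ffunP => e; rewrite ffunE.
case: (e =P j) => [->|/eqP/rest0//].
by move: deg1; rewrite (bigD1 j) //= big1 ?addn0.
Qed.

Lemma sum_half_edges (v : T4V) (F : T4H -> int) :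
  \sum_(h : T4H | t4vert h == v) F h = \sum_(e : 'I_4) F (v, e).
Proof.
transitivity (\sum_(i | i == v) \sum_(e : 'I_4) F (i, e)); last by rewrite big_pred1_eq.
by rewrite pair_big_dep /=; apply: eq_big => [[i e]|[i e] _] //=; rewrite andbT.
Qed.

(* Koszul signs: nothing precedes [v1], and only the factor at [v1]
   precedes [v2]. *)
Lemma ksign_v1 (s : state T4V T4H) : ksign s v1 = 1.
Proof.
rewrite /ksign (_ : [set _ | _] = set0) ?cards0 //.
by apply/setP => v; rewrite !inE !(@enum_rank_ord 2).
Qed.

Lemma ksign_v2 (s : state T4V T4H) : ksign s v2 = if is_half (s v1) then -1 else 1.
Proof.
rewrite /ksign (_ : [set _ | _] = if is_half (s v1) then [set v1] else set0).
  by case: (is_half _); rewrite ?cards1 ?cards0 ?expr1.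
apply/setP => v; rewrite !inE !(@enum_rank_ord 2) /=.
by case: (T4V_cases v) => ->; case: (is_half (s v1)); rewrite ?inE.
Qed.

(* The chain whose coefficient on [e_j h_{1,a} h_{2,b}] is [f j a b], and
   which vanishes on all other generators; it is written by cases on the
   state so that it unfolds well under the differential. *)
Definition table_chain (f : table) (g : t4gen) : int :=
  match g.2 v1, g.2 v2 with
  | Some (Some h), Some (Some h') =>
      ((h.1 == v1) && (h'.1 == v2))%:Z * \sum_j (g.1 == edge_mono j)%:Z * f j h.2 h'.2
  | _, _ => 0
  end.

Lemma table_chain_upd_v1 f (m : mono T4E) (s : state T4V T4H) e :
  table_chain f (m, upd s v1 (Some (Some (v1, e)))) =
  if s v2 is Some (Some h') then
    (h'.1 == v2)%:Z * \sum_j (m == edge_mono j)%:Z * f j e h'.2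
  else 0.
Proof. by rewrite /table_chain /= !ffunE /= ?eqxx; case: (s v2) => [[h|]|] //=. Qed.

Lemma table_chain_upd_v2 f (m : mono T4E) (s : state T4V T4H) e :
  table_chain f (m, upd s v2 (Some (Some (v2, e)))) =
  if s v1 is Some (Some h) then
    (h.1 == v1)%:Z * \sum_j (m == edge_mono j)%:Z * f j h.2 e
  else 0.
Proof.
by rewrite /table_chain /= !ffunE /= ?eqxx; case: (s v1) => [[h|]|] //=; rewrite andbT.
Qed.

(* The term of the differential coming from [∂h = e(h) - v(h)] at an empty
   factor, for the edge [e] of [h]. *)
Lemma if_decr (m : mono T4E) (e : T4E) (k c : int) (F : T4E -> int) :
  (if (0 < m e)%N then k * (c * \sum_j (decr m e == edge_mono j)%:Z * F j) else 0)
  = k * (c * \sum_j (m == edge_mono2 j e)%:Z * F j).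
Proof.
case: ifP => me.
  by congr (_ * (_ * _)); apply: eq_bigr => j _; rewrite -decr_edge_mono me.
by rewrite big1 ?mulr0 // => j _; rewrite -decr_edge_mono me mul0r.
Qed.

(* Only four kinds of generators
   receive a coefficient: one vertex factor is a half-edge at its own vertex
   and the other is empty (the monomial then has degree 2) or a vertex
   (degree 1). *)
Lemma sdiff_table_chain f (m : mono T4E) (s : state T4V T4H) :
  sdiff t4vert t4edg (table_chain f) (m, s) =
  match s v1, s v2 with
  | None, Some (Some h') =>
      (h'.1 == v2)%:Z * \sum_e \sum_j (m == edge_mono2 j e)%:Z * f j e h'.2
  | Some None, Some (Some h') =>
      - ((h'.1 == v2)%:Z * \sum_e \sum_j (m == edge_mono j)%:Z * f j e h'.2)
  | Some (Some h), None =>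
      - ((h.1 == v1)%:Z * \sum_e \sum_j (m == edge_mono2 j e)%:Z * f j h.2 e)
  | Some (Some h), Some None =>
      (h.1 == v1)%:Z * \sum_e \sum_j (m == edge_mono j)%:Z * f j h.2 e
  | _, _ => 0
  end.
Proof.
rewrite /sdiff /= sum_T4V ksign_v1 ksign_v2 !sum_half_edges /=.
case E1: (s v1) => [[h|]|]; case E2: (s v2) => [[h'|]|] /=.
all: try (under eq_bigr => e _ do rewrite ?table_chain_upd_v1 ?table_chain_upd_v2 ?E1 ?E2).
all: try (under [X in _ + X]eq_bigr => e _ do
            rewrite ?table_chain_upd_v1 ?table_chain_upd_v2 ?E1 ?E2).
all: try (under [X in _ - X]eq_bigr => e _ do
            rewrite ?table_chain_upd_v1 ?table_chain_upd_v2 ?E1 ?E2).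
all: rewrite /= ?add0r ?addr0.
all: try (by rewrite !big1 ?oppr0 ?subr0 ?addr0 // => e _; rewrite ?if_same).
all: try (under eq_bigr => e _ do rewrite ?if_decr ?mul1r ?mulN1r).
all: by rewrite ?sumrN ?opprK -?mulr_sumr.
Qed.

Lemma halves_term j (s : state T4V T4H) h1 h2 :
  s v1 = Some (Some h1) -> h1.1 = v1 -> s v2 = Some (Some h2) -> h2.1 = v2 ->
  (edge_mono j, s) = t4term j h1.2 h2.2.
Proof.
move=> s1 h1v s2 h2v; congr pair; apply/ffunP => v; rewrite ffunE.
case: (T4V_cases v) => ->; first by rewrite s1 [h1]surjective_pairing h1v.
by rewrite s2 [h2]surjective_pairing h2v.
Qed.

Lemma t4term_bidegree j a b :
  [&& valid_state t4vert (t4term j a b).2, sdeg (t4term j a b).2 == 2%N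
    & gwt (t4term j a b) == 3%N].
Proof.
have all_half : [set v | is_half ((t4term j a b).2 v)] = setT.
  by apply/setP => v; rewrite !inE ffunE; case: ifP.
have all_nonempty : [set v | (t4term j a b).2 v != None] = setT.
  by apply/setP => v; rewrite !inE ffunE; case: ifP.
apply/and3P; split.
- apply/forallP => v; apply/forallP => h; apply/implyP; rewrite ffunE.
  by case: ifP => [/eqP -> | _] /eqP [<-].
- by rewrite /sdeg all_half cardsT card_ord.
- rewrite /gwt all_nonempty cardsT card_ord (bigD1 j) //= ffunE eqxx big1 // => e.
  by rewrite ffunE => /negbTE ->.
Qed.

(* Conversely every generator of bidegree (2, 3) is some [e_j h_{1,a} h_{2,b}]:
   both vertex factors are half-edges, so the monomial has degree one. *)
Lemma bidegree_2_3_term (g : t4gen) :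
  [&& valid_state t4vert g.2, sdeg g.2 == 2%N & gwt g == 3%N] ->
  exists j a b, g = t4term j a b.
Proof.
case: g => m s /and3P [/forallP valid /eqP deg2 /eqP wt3] /=.
have all_half : [set v | is_half (s v)] = setT.
  by apply/eqP; rewrite eqEcard subsetT cardsT card_ord; move: deg2; rewrite /sdeg => ->.
have half v : exists2 h, s v = Some (Some h) & h.1 = v.
  have : v \in [set v | is_half (s v)] by rewrite all_half inE.
  rewrite inE; case sv: (s v) => [[h|]|] // _; exists h => //.
  by move: (valid v) => /forallP /(_ h); rewrite sv eqxx => /eqP.
have all_nonempty : [set v | s v != None] = setT.
  by apply/setP => v; rewrite !inE; have [h -> _] := half v.
move: wt3; rewrite /gwt /= all_nonempty cardsT card_ord => wt3.
have [j ->] : exists j, m = edge_mono j by apply: mono_deg1; apply: (@addIn 2).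
have [h1 s1 h1v] := half v1; have [h2 s2 h2v] := half v2.
by exists j, h1.2, h2.2; apply: halves_term.
Qed.

Lemma t4term_eq j a b j' a' b' :
  (t4term j a b == t4term j' a' b') = [&& j == j', a == a' & b == b'].
Proof.
apply/eqP/and3P => [[eq_mono eq_state]|[/eqP-> /eqP-> /eqP->] //].
have := congr1 (fun s : state T4V T4H => s v1) eq_state.
have := congr1 (fun s : state T4V T4H => s v2) eq_state.
rewrite !ffunE /= => -[->] [->]; split => //.
by rewrite -edge_mono_eq; apply/eqP.
Qed.

Lemma table_chain_term f j a b : table_chain f (t4term j a b) = f j a b.
Proof.
rewrite /table_chain /= !ffunE /= mul1r (bigD1 j) //= (edge_mono_eq j j) eqxx mul1r.
by rewrite big1 ?addr0 // => j' /negbTE; rewrite edge_mono_eq eq_sym => ->; rewrite mul0r.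
Qed.

Lemma table_chain_support f g : table_chain f g != 0 -> exists j a b, g = t4term j a b.
Proof.
case: g => m s; rewrite /table_chain /=.
case s1: (s v1) => [[h1|]|] //; case s2: (s v2) => [[h2|]|] //.
case: (h1.1 =P v1) => [h1v|_]; last by rewrite mul0r eqxx.
case: (h2.1 =P v2) => [h2v|_]; last by rewrite mul0r eqxx.
rewrite mul1r.
have [/existsP [j /eqP -> _]|] := boolP [exists j, m == edge_mono j]; last first.
  rewrite negb_exists => /forallP m_not_edge.
  by rewrite big1 ?eqxx // => j _; rewrite (negbTE (m_not_edge j)) mul0r.
by exists j, h1.2, h2.2; apply: halves_term.
Qed.

Definition is_term (g : t4gen) : bool := [exists j, exists a, exists b, g == t4term j a b].

Lemma term_is_term j a b : is_term (t4term j a b).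
Proof. by apply/existsP; exists j; apply/existsP; exists a; apply/existsP; exists b. Qed.

Lemma not_term_neq g j a b : ~~ is_term g -> (g == t4term j a b) = false.
Proof. by apply: contraNF => /eqP ->; apply: term_is_term. Qed.

Lemma chain_ext (u w : t4gen -> int) :
  (forall g, ~~ is_term g -> u g = 0) -> (forall g, ~~ is_term g -> w g = 0) ->
  (forall j a b, u (t4term j a b) = w (t4term j a b)) -> forall g, u g = w g.
Proof.
move=> u0 w0 uw g; have [|not_term] := boolP (is_term g); last by rewrite u0 ?w0.
by case/existsP => j /existsP [a /existsP [b /eqP ->]].
Qed.

Lemma table_chain_off_terms f g : ~~ is_term g -> table_chain f g = 0.
Proof.
move=> not_term; apply/eqP; apply: contraNT not_term.
by case/table_chain_support => j [a [b ->]]; apply: term_is_term.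
Qed.

Lemma chain_off_terms (z : t4gen -> int) g :
  is_chain t4vert 2 3 z -> ~~ is_term g -> z g = 0.
Proof.
move=> z_chain not_term; apply/eqP; apply: contraNT not_term.
by case/z_chain/bidegree_2_3_term => j [a [b ->]]; apply: term_is_term.
Qed.

Lemma chain_table (z : t4gen -> int) : is_chain t4vert 2 3 z ->
  forall g, z g = table_chain (fun j a b => z (t4term j a b)) g.
Proof.
move=> z_chain; apply: chain_ext => [g|g|j a b]; last by rewrite table_chain_term.
  exact: chain_off_terms.
exact: table_chain_off_terms.
Qed.

Lemma t4pprod_term j' a' b' j a b :
  t4pprod j' a' b' (t4term j a b) =
  (j == j')%:Z * ((a == a')%:Z - (a == i0)%:Z) * ((b == b')%:Z - (b == i0)%:Z).
Proof.
rewrite /t4pprod /delta !t4term_eq.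
by case: (j == j'); case: (a == a'); case: (a == i0); case: (b == b'); case: (b == i0).
Qed.

(* [A_2] with the numerals of its definition read as the indices [i1], [i2]. *)
Lemma A2E g : A2 g = \sum_(s : 'S_4) (-1) ^+ s *
  (t4pprod i0 (s i0) (s i1) g - t4pprod (s i2) (s i0) (s i1) g).
Proof.
apply: eq_bigr => s _.
by congr (_ * (t4pprod _ _ (s _) _ - t4pprod (s _) _ (s _) _)); apply: val_inj.
Qed.

(* Expanding the product, every term except [e_{s 3} h_{1,s 1} h_{2,s 2}]
   (1-based) ignores at least two of the four positions of [s], and so
   cancels in the signed sum. *)
Lemma A2_term j a b : A2 (t4term j a b) = alpha j a b.
Proof.
pose Main (s : 'S_4) := (j == s i2)%:Z * (a == s i0)%:Z * (b == s i1)%:Z.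
pose F0 (s : 'S_4) :=
  (j == i0)%:Z * ((a == s i0)%:Z - (a == i0)%:Z) * ((b == s i1)%:Z - (b == i0)%:Z).
pose F1 (s : 'S_4) := (j == s i2)%:Z * (a == i0)%:Z * (b == s i1)%:Z.
pose F2 (s : 'S_4) := (j == s i2)%:Z * (a == s i0)%:Z * (b == i0)%:Z.
pose F3 (s : 'S_4) := (j == s i2)%:Z * (a == i0)%:Z * (b == i0)%:Z.
transitivity (\sum_(s : 'S_4) ((-1) ^+ s * F0 s - (-1) ^+ s * Main s
   + (-1) ^+ s * F1 s + (-1) ^+ s * F2 s - (-1) ^+ s * F3 s)).
  rewrite A2E; apply: eq_bigr => s _; rewrite !t4pprod_term /Main /F0 /F1 /F2 /F3.
  by move: ((-1) ^+ s) => sign; ring.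
rewrite !big_split /= !sumrN.
rewrite (alternating_sum_eq0 (x := i2) (y := i3) (F := F0)) //; last first.
  by move=> s; rewrite /F0 !permM !tpermD.
rewrite (alternating_sum_eq0 (x := i0) (y := i3) (F := F1)) //; last first.
  by move=> s; rewrite /F1 !permM !tpermD.
rewrite (alternating_sum_eq0 (x := i1) (y := i3) (F := F2)) //; last first.
  by move=> s; rewrite /F2 !permM !tpermD.
rewrite (alternating_sum_eq0 (x := i0) (y := i1) (F := F3)) //; last first.
  by move=> s; rewrite /F3 !permM !tpermD.
rewrite /alpha subr0 !addr0 sub0r; congr (- _); apply: eq_bigr => s _.
by rewrite /Main !(eq_sym (s _)); case: (j == _); case: (a == _); case: (b == _).
Qed.

Lemma A2_off_terms g : ~~ is_term g -> A2 g = 0.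
Proof.
move=> not_term; rewrite /A2 big1 // => s _.
by rewrite /t4pprod /delta !not_term_neq // subrr mulr0.
Qed.

Lemma A2_table_chain g : A2 g = table_chain alpha g.
Proof.
apply: chain_ext g => [g|g|j a b]; first exact: A2_off_terms.
  exact: table_chain_off_terms.
by rewrite A2_term table_chain_term.
Qed.

Lemma sum_delta (F : 'I_4 -> int) x : \sum_j (x == j)%:Z * F j = F x.
Proof.
rewrite (bigD1 x) //= eqxx mul1r big1 ?addr0 // => j.
by rewrite eq_sym => /negbTE ->; rewrite mul0r.
Qed.

Lemma sum_delta2 (F : 'I_4 -> 'I_4 -> int) x y :
  \sum_k \sum_j ((j == x) && (k == y))%:Z * F j k = F x y.
Proof.
rewrite (bigD1 y) //= eqxx [X in _ + X]big1 ?addr0; last first.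
  by move=> k /negbTE neq_ky; apply: big1 => j _; rewrite neq_ky andbF mul0r.
by under eq_bigr do rewrite andbT eq_sym; rewrite sum_delta.
Qed.

Lemma sum_mono2 (F : 'I_4 -> 'I_4 -> int) p q :
  \sum_k \sum_j (edge_mono2 p q == edge_mono2 j k)%:Z * F j k
  = if p == q then F p p else F p q + F q p.
Proof.
under eq_bigr => k _ do under eq_bigr => j _ do rewrite edge_mono2_eq.
have [<-|neq_pq] := eqVneq p q.
  by under eq_bigr => k _ do under eq_bigr => j _ do rewrite orbb; rewrite sum_delta2.
have split_or j k : (((j == p) && (k == q)) || ((j == q) && (k == p)))%:Z
    = ((j == p) && (k == q))%:Z + ((j == q) && (k == p))%:Z :> int.
  by case: (j =P p) => [->|_] /=; rewrite ?(negbTE neq_pq) ?orbF ?add0r ?addr0.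
under eq_bigr => k _ do under eq_bigr => j _ do rewrite split_or mulrDl.
by under eq_bigr => k _ do rewrite big_split; rewrite big_split !sum_delta2.
Qed.

Lemma sum_sym_antisym (W F : 'I_4 -> 'I_4 -> int) :
  (forall j k, W j k = W k j) -> (forall j k, F j k = - F k j) ->
  \sum_k \sum_j W j k * F j k = 0.
Proof.
move=> W_sym F_antisym; apply/eqP; rewrite -eqNr -sumrN; apply/eqP.
rewrite exchange_big /=; apply: eq_bigr => k _; rewrite -sumrN; apply: eq_bigr => j _.
by rewrite W_sym F_antisym mulrN opprK.
Qed.

(* Cycle tables give cycles: the four kinds of boundary coefficients are
   the two antisymmetries and the two row sums. *)
Lemma table_chain_cycle f : cycle_table f ->
  forall g, sdiff t4vert t4edg (table_chain f) g = 0.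
Proof.
move=> f_cycle [m s]; rewrite sdiff_table_chain.
case: (s v1) => [[h|]|]; case: (s v2) => [[h'|]|] //.
- rewrite exchange_big big1 ?mulr0 // => j _.
  by rewrite -mulr_sumr table_sum3 ?mulr0.
- rewrite sum_sym_antisym ?mulr0 ?oppr0 // => [j k|j k]; first by rewrite edge_mono2C.
  exact: table_swap13.
- rewrite exchange_big big1 ?mulr0 ?oppr0 // => j _.
  by rewrite -mulr_sumr table_sum2 ?mulr0.
- rewrite sum_sym_antisym ?mulr0 // => [j k|j k]; first by rewrite edge_mono2C.
  exact: table_swap12.
Qed.

Definition state_of (x y : option (option T4H)) : state T4V T4H :=
  [ffun v => if v == v1 then x else y].

Lemma state_of_v1 x y : state_of x y v1 = x. Proof. by rewrite ffunE eqxx. Qed.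
Lemma state_of_v2 x y : state_of x y v2 = y. Proof. by rewrite ffunE. Qed.

(* Conversely, the coefficients of the boundary of a cycle on
   [e_j e_a h_{2,b}], [e_j e_b h_{1,a}] and [e_j v_1 h_{2,b}] give the
   relations of a cycle table. *)
Lemma cycle_table_of_cycle f :
  (forall g, sdiff t4vert t4edg (table_chain f) g = 0) -> cycle_table f.
Proof.
move=> f_cycle; split=> [j a b|j a b|j b].
- have := f_cycle (edge_mono2 j a, state_of None (Some (Some (v2, b)))).
  rewrite sdiff_table_chain /= state_of_v1 state_of_v2 /= mul1r sum_mono2.
  by have [->|_] := eqVneq j a; lia.
- have := f_cycle (edge_mono2 j b, state_of (Some (Some (v1, a))) None).
  rewrite sdiff_table_chain /= state_of_v1 state_of_v2 /= mul1r.
  rewrite (sum_mono2 (fun j b => f j a b)).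
  by have [->|_] := eqVneq j b; lia.
- have := f_cycle (edge_mono j, state_of (Some None) (Some (Some (v2, b)))).
  rewrite sdiff_table_chain /= state_of_v1 state_of_v2 /= mul1r.
  under eq_bigr => k _ do under eq_bigr => i _ do rewrite edge_mono_eq.
  by under eq_bigr do rewrite sum_delta; move/eqP; rewrite oppr_eq0 => /eqP.
Qed.

Theorem mainTheorem4 :
  is_chain t4vert 2 3 A2 /\
  (forall g, sdiff t4vert t4edg A2 g = 0) /\
  (forall z : t4gen -> int,
     is_chain t4vert 2 3 z ->
     (forall g, sdiff t4vert t4edg z g = 0) ->
     exists (n : int) (b : t4gen -> int),
       is_chain t4vert 3 3 b /\
       forall g, z g = n * A2 g + sdiff t4vert t4edg b g).
Proof.
(* [A_2] is the chain of the cycle table [alpha]. *)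
split; [|split].
- move=> g; rewrite A2_table_chain => /table_chain_support [j [a [b ->]]].
  exact: t4term_bidegree.
- move=> g; rewrite (sdiff_ext t4vert t4edg A2_table_chain).
  exact: (table_chain_cycle alpha_cycle_table).
(* A 2-cycle [z] is the chain of its table [tz], a cycle table, hence a
   multiple of [alpha] by the rank-one property. *)
move=> z z_chain z_cycle.
pose tz j a b := z (t4term j a b).
have tz_cycle : cycle_table tz.
  apply: cycle_table_of_cycle => g.
  by rewrite -(sdiff_ext t4vert t4edg (chain_table z_chain)).
exists (- tz i2 i0 i1), (fun _ => 0); split => [g|g]; first by rewrite eqxx.
rewrite sdiff_zero addr0.
apply: (chain_ext (u := z) (w := fun g => - tz i2 i0 i1 * A2 g)) => [{}g|{}g|j a b].
- exact: chain_off_terms.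
- by move/A2_off_terms ->; rewrite mulr0.
- by rewrite A2_term -cycle_table_rank_one.
Qed.
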